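(* For every non-empty open set $U$ of $\mathcal{K}_2$ there exists $N\ge3$ such that $\mathcal{B}_2^\phi(j)\cap U\neq\emptyset$ for all $j\ge N$. In particular, $\mathcal{B}_2^\phi=\bigcup_{j\ge3}\mathcal{B}_2^\phi(j)$ is dense in $\mathcal{K}_2$.
   Context: $\mathcal{K}_2$ is the set of centrally symmetric convex bodies in $\mathbb{R}^2$ (compact convex sets with non-empty interior, symmetric about the origin) with the Hausdorff metric. For a spanning set $a=\{a_1,\dots,a_n\}\subset\mathbb{R}^2$ with $n\ge3$ and $w>\log 2n$ (natural log), let $\phi_{a,w}(x)=\frac{1}{2n}\sum_{i=1}^n\left(e^{w(a_i\cdot x-1)}+e^{w(-a_i\cdot x-1)}\right)$. For $j\ge3$, $\mathcal{B}_2^\phi(j)$ is the set of $C\subset\mathbb{R}^2$ for which there exist a spanning set $a=\{a_1,\dots,a_j\}\subset\mathbb{R}^2$ and $w>\log2j$ with $C=\{x\in\mathbb{R}^2:\phi_{a,w}(x)\le1\}$. *)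

From Stdlib Require Import Reals Lra.
Open Scope R_scope.

Definition pt := (R * R)%type.

Definition dot (u v : pt) : R := fst u * fst v + snd u * snd v.

Definition dist2 (u v : pt) : R :=
  sqrt ((fst u - fst v) ^ 2 + (snd u - snd v) ^ 2).

Fixpoint fsum (f : nat -> R) (n : nat) : R :=
  match n with
  | O => 0
  | S m => fsum f m + f m
  end.

Definition pscale (c : R) (u : pt) : pt := (c * fst u, c * snd u).
Definition padd (u v : pt) : pt := (fst u + fst v, snd u + snd v).

Definition convex (C : pt -> Prop) : Prop :=
  forall x y t, C x -> C y -> 0 <= t <= 1 ->
    C (padd (pscale t x) (pscale (1 - t) y)).

Definition closed_set (C : pt -> Prop) : Prop :=
  forall x, (forall eps, 0 < eps -> exists y, C y /\ dist2 x y < eps) -> C x.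

Definition bounded_set (C : pt -> Prop) : Prop :=
  exists M, forall x, C x -> dist2 x (0, 0) <= M.

(* compact in R^2 = closed and bounded (Heine-Borel) *)
Definition compact_set (C : pt -> Prop) : Prop := closed_set C /\ bounded_set C.

Definition nonempty_interior (C : pt -> Prop) : Prop :=
  exists x r, 0 < r /\ forall y, dist2 x y < r -> C y.

Definition symmetric (C : pt -> Prop) : Prop :=
  forall x, C x -> C (- fst x, - snd x).

Definition K2 (C : pt -> Prop) : Prop :=
  convex C /\ compact_set C /\ nonempty_interior C /\ symmetric C.

Definition hclose (A B : pt -> Prop) (r : R) : Prop :=
  (forall a, A a -> exists b, B b /\ dist2 a b <= r) /\
  (forall b, B b -> exists a, A a /\ dist2 a b <= r).

(* d_H(A,B) < eps, where d_H(A,B) = inf { r >= 0 | hclose A B r } *)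
Definition hdist_lt (A B : pt -> Prop) (eps : R) : Prop :=
  exists r, 0 <= r /\ r < eps /\ hclose A B r.

Definition open_in_K2 (U : (pt -> Prop) -> Prop) : Prop :=
  (forall C, U C -> K2 C) /\
  (forall C, U C -> exists eps, 0 < eps /\
     forall D, K2 D -> hdist_lt C D eps -> U D).

Definition spanning (a : nat -> pt) (n : nat) : Prop :=
  forall x : pt, exists c : nat -> R,
    fst x = fsum (fun i => c i * fst (a i)) n /\
    snd x = fsum (fun i => c i * snd (a i)) n.

Definition phi (a : nat -> pt) (n : nat) (w : R) (x : pt) : R :=
  / (2 * INR n) *
  fsum (fun i => exp (w * (dot (a i) x - 1)) + exp (w * (- dot (a i) x - 1))) n.

Definition distinct_pts (a : nat -> pt) (n : nat) : Prop :=
  forall i k, (i < n)%nat -> (k < n)%nat -> a i = a k -> i = k.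

Definition Bphi (j : nat) (C : pt -> Prop) : Prop :=
  exists (a : nat -> pt) (w : R),
    distinct_pts a j /\ spanning a j /\ ln (2 * INR j) < w /\
    forall x, C x <-> phi a j w x <= 1.

(* Fix K in K_2 and r > 0.  Along 4m+2 finely spaced rays, a two-dimensional Hahn-Banach
   argument gives functionals f_k with f_k <= 1 on K and f_k = 1 at the point where the ray
   leaves K; for m large and g small the polytope {x : |f_k.x| <= 1 + g for all k} is within r
   of K.  Put a_i = sigma_i f_(i mod n) with distinct sigma_i in [1 - g/4, 1] and w ~ ln(2j)/g.
   On K all |a_i.x| <= 1, so phi_(a,w) <= 1, while phi_(a,w)(x) <= 1 forces
   |a_i.x| <= 1 + ln(2j)/w, which puts x in the polytope: the sublevel set is r-close to K for
   every j >= 4m+2.  It is a symmetric convex body since each term of phi is convex, even and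
   continuous; the a_i are distinct because sup_K f_k = 1, and they span because the slab
   {x : |a_i.x| <= 1 for all i} is bounded. *)

From Stdlib Require Import Reals Lra Lia Rgeom ClassicalEpsilon.
Open Scope R_scope.

(** * Plane geometry *)

Definition pneg (x : pt) : pt := (- fst x, - snd x).
Definition pswap (x : pt) : pt := (snd x, fst x).
Definition perp (u : pt) : pt := (- snd u, fst u).
Definition norm1 (x : pt) : R := Rabs (fst x) + Rabs (snd x).
Definition dist1 (x y : pt) : R := Rabs (fst x - fst y) + Rabs (snd x - snd y).

Lemma pt_eq (x y : pt) : fst x = fst y -> snd x = snd y -> x = y.
Proof. destruct x, y; simpl; intros -> ->; reflexivity. Qed.

Lemma Rabs_le_inv a b : Rabs a <= b -> - b <= a <= b.
Proof. pose proof (RRle_abs a); pose proof (RRle_abs (- a)); rewrite Rabs_Ropp in *; lra. Qed.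

Lemma pneg_involutive x : pneg (pneg x) = x.
Proof. apply pt_eq; simpl; ring. Qed.

Lemma dot_pscale c f y : dot f (pscale c y) = c * dot f y.
Proof. unfold dot, pscale; simpl; ring. Qed.

Lemma dot_pscale_l c f y : dot (pscale c f) y = c * dot f y.
Proof. unfold dot, pscale; simpl; ring. Qed.

Lemma dot_convex_comb f x y t :
  dot f (padd (pscale t x) (pscale (1 - t) y)) = t * dot f x + (1 - t) * dot f y.
Proof. unfold dot, padd, pscale; simpl; ring. Qed.

Lemma dot_pneg f x : dot f (pneg x) = - dot f x.
Proof. unfold dot, pneg; simpl; ring. Qed.

Lemma norm1_nonneg x : 0 <= norm1 x.
Proof. unfold norm1; pose proof (Rabs_pos (fst x)); pose proof (Rabs_pos (snd x)); lra. Qed.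

Lemma dot_le_norm1 f x b :
  Rabs (fst f) <= b -> Rabs (snd f) <= b -> Rabs (dot f x) <= b * norm1 x.
Proof.
  intros H1 H2; unfold dot, norm1.
  eapply Rle_trans; [apply Rabs_triang|]; rewrite !Rabs_mult.
  pose proof (Rabs_pos (fst x)); pose proof (Rabs_pos (snd x)); nra.
Qed.

Lemma dist2_fst x y : Rabs (fst x - fst y) <= dist2 x y.
Proof.
  rewrite <- sqrt_Rsqr_abs; apply sqrt_le_1_alt.
  pose proof (Rle_0_sqr (snd x - snd y)); unfold Rsqr in *; nra.
Qed.

Lemma dist2_snd x y : Rabs (snd x - snd y) <= dist2 x y.
Proof.
  rewrite <- sqrt_Rsqr_abs; apply sqrt_le_1_alt.
  pose proof (Rle_0_sqr (fst x - fst y)); unfold Rsqr in *; nra.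
Qed.

Lemma dist2_le_dist1 x y : dist2 x y <= dist1 x y.
Proof.
  unfold dist1, dist2; set (a := fst x - fst y); set (b := snd x - snd y).
  pose proof (Rabs_pos a); pose proof (Rabs_pos b).
  rewrite <- (sqrt_square (Rabs a + Rabs b)) by lra.
  apply sqrt_le_1_alt.
  rewrite <- (pow2_abs a), <- (pow2_abs b).
  pose proof (Rmult_le_pos _ _ (Rabs_pos a) (Rabs_pos b)); nra.
Qed.

Lemma dist2_triangle x y z : dist2 x z <= dist2 x y + dist2 y z.
Proof.
  pose proof (triangle (fst x) (snd x) (fst z) (snd z) (fst y) (snd y)) as H.
  unfold dist_euc, Rsqr in H; unfold dist2; simpl; rewrite !Rmult_1_r; exact H.
Qed.

Lemma dist2_sym x y : dist2 x y = dist2 y x.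
Proof. unfold dist2; f_equal; ring. Qed.

Lemma dist2_refl x : dist2 x x = 0.
Proof. unfold dist2; rewrite !Rminus_diag; simpl; rewrite Rmult_0_l, Rplus_0_r; exact sqrt_0. Qed.

Lemma dist2_pneg x y : dist2 (pneg x) (pneg y) = dist2 x y.
Proof. unfold dist2, pneg; simpl; f_equal; ring. Qed.

Lemma dot_sub_le_dist2 b x y : Rabs (dot b x - dot b y) <= norm1 b * dist2 x y.
Proof.
  unfold dot, norm1.
  replace (fst b * fst x + snd b * snd x - (fst b * fst y + snd b * snd y))
    with (fst b * (fst x - fst y) + snd b * (snd x - snd y)) by ring.
  eapply Rle_trans; [apply Rabs_triang|]; rewrite !Rabs_mult.
  pose proof (dist2_fst x y); pose proof (dist2_snd x y).
  pose proof (Rabs_pos (fst b)); pose proof (Rabs_pos (snd b)); nra.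
Qed.

Lemma dist1_triangle x y z : dist1 x z <= dist1 x y + dist1 y z.
Proof.
  unfold dist1.
  pose proof (Rabs_triang (fst x - fst y) (fst y - fst z)).
  pose proof (Rabs_triang (snd x - snd y) (snd y - snd z)).
  replace (fst x - fst z) with (fst x - fst y + (fst y - fst z)) by ring.
  replace (snd x - snd z) with (snd x - snd y + (snd y - snd z)) by ring.
  lra.
Qed.

Lemma dist1_pscale a b u : dist1 (pscale a u) (pscale b u) = Rabs (a - b) * norm1 u.
Proof.
  unfold dist1, norm1, pscale; simpl.
  rewrite <- !Rmult_minus_distr_r, !Rabs_mult; ring.
Qed.

Lemma dist1_pswap x y : dist1 (pswap x) (pswap y) = dist1 x y.
Proof. unfold dist1, pswap; simpl; ring. Qed.

Lemma dot_sub_le_dist1 f x y b :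
  Rabs (fst f) <= b -> Rabs (snd f) <= b -> Rabs (dot f x - dot f y) <= b * dist1 x y.
Proof.
  intros H1 H2.
  replace (dot f x - dot f y) with (dot f (fst x - fst y, snd x - snd y)) by (unfold dot; simpl; ring).
  apply dot_le_norm1; assumption.
Qed.

Lemma bounded_of_near (K S : pt -> Prop) r :
  bounded_set K -> (forall x, S x -> exists c, K c /\ dist2 c x <= r) -> bounded_set S.
Proof.
  intros [M HM] Hnear; exists (r + M); intros x Hx.
  destruct (Hnear x Hx) as [c [Hc Hcx]].
  pose proof (dist2_triangle x c (0, 0)); pose proof (HM c Hc).
  rewrite dist2_sym in Hcx; lra.
Qed.

Lemma bounded_line_degenerate (S : pt -> Prop) v :
  bounded_set S -> (forall t, S (pscale t v)) -> norm1 v = 0.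
Proof.
  intros [M HM] Hline; pose proof (norm1_nonneg v).
  destruct (Req_dec (norm1 v) 0) as [|Hne]; [assumption|]; exfalso.
  set (t := (2 * Rabs M + 1) / norm1 v).
  specialize (HM _ (Hline t)).
  pose proof (dist2_fst (pscale t v) (0, 0)); pose proof (dist2_snd (pscale t v) (0, 0)).
  pose proof (RRle_abs M).
  unfold norm1, pscale in *; simpl in *; rewrite !Rminus_0_r, !Rabs_mult in *.
  assert (Ht : Rabs t * (Rabs (fst v) + Rabs (snd v)) = 2 * Rabs M + 1).
  { unfold t; rewrite Rabs_right; [field; lra|].
    apply Rle_ge, Rmult_le_pos; [pose proof (Rabs_pos M); lra | left; apply Rinv_0_lt_compat; lra]. }
  lra.
Qed.

(** * Finite sums and spanning sets *)

Lemma fsum_ext f g n : (forall i, (i < n)%nat -> f i = g i) -> fsum f n = fsum g n.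
Proof.
  induction n as [|n IH]; intros H; simpl; [reflexivity|].
  rewrite IH by (intros; apply H; lia); rewrite H by lia; reflexivity.
Qed.

Lemma fsum_le f g n : (forall i, (i < n)%nat -> f i <= g i) -> fsum f n <= fsum g n.
Proof.
  induction n as [|n IH]; intros H; simpl; [lra|].
  pose proof (IH (fun i Hi => H i ltac:(lia))); pose proof (H n ltac:(lia)); lra.
Qed.

Lemma fsum_add f g n : fsum (fun i => f i + g i) n = fsum f n + fsum g n.
Proof. induction n as [|n IH]; simpl; [ring | rewrite IH; ring]. Qed.

Lemma fsum_scale c f n : fsum (fun i => c * f i) n = c * fsum f n.
Proof. induction n as [|n IH]; simpl; [ring | rewrite IH; ring]. Qed.

Lemma fsum_const c n : fsum (fun _ => c) n = INR n * c.
Proof. induction n as [|n IH]; simpl fsum; [simpl; ring | rewrite IH, S_INR; ring]. Qed.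

Lemma fsum_nonneg f n : (forall i, (i < n)%nat -> 0 <= f i) -> 0 <= fsum f n.
Proof.
  intros H; rewrite <- (Rmult_0_r (INR n)), <- fsum_const.
  apply fsum_le; exact H.
Qed.

Lemma fsum_ge_term f n k :
  (forall i, (i < n)%nat -> 0 <= f i) -> (k < n)%nat -> f k <= fsum f n.
Proof.
  induction n as [|n IH]; intros H Hk; [lia|]; simpl.
  destruct (Nat.eq_dec k n) as [->|Hne].
  - pose proof (fsum_nonneg f n (fun i Hi => H i ltac:(lia))); lra.
  - pose proof (IH (fun i Hi => H i ltac:(lia)) ltac:(lia)); pose proof (H n ltac:(lia)); lra.
Qed.

Lemma fsum_delta k c v n :
  (k < n)%nat -> fsum (fun i => (if Nat.eqb i k then c else 0) * v i) n = c * v k.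
Proof.
  induction n as [|n IH]; intros Hk; [lia|]; simpl.
  destruct (Nat.eq_dec k n) as [->|Hne].
  - rewrite Nat.eqb_refl, (fsum_ext _ (fun _ => 0)), fsum_const; [ring|].
    intros i Hi; destruct (Nat.eqb_spec i n); [lia | ring].
  - rewrite IH by lia; destruct (Nat.eqb_spec n k); [lia | ring].
Qed.

Lemma spanning_of_cross a n i l : (i < n)%nat -> (l < n)%nat ->
  fst (a i) * snd (a l) - snd (a i) * fst (a l) <> 0 -> spanning a n.
Proof.
  intros Hi Hl Hdet x; set (det := fst (a i) * snd (a l) - snd (a i) * fst (a l)) in *.
  set (ci := (fst x * snd (a l) - snd x * fst (a l)) / det).
  set (cl := (fst (a i) * snd x - snd (a i) * fst x) / det).
  exists (fun k => (if Nat.eqb k i then ci else 0) + (if Nat.eqb k l then cl else 0)).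
  assert (Hsum : forall v : nat -> R,
    fsum (fun k => ((if Nat.eqb k i then ci else 0) + (if Nat.eqb k l then cl else 0)) * v k) n
    = ci * v i + cl * v l).
  { intros v; rewrite <- (fsum_delta i ci v n Hi), <- (fsum_delta l cl v n Hl), <- fsum_add.
    apply fsum_ext; intros; ring. }
  rewrite !Hsum; unfold ci, cl, det in *; split; field; exact Hdet.
Qed.

Lemma spanning_of_bounded_slab a n :
  bounded_set (fun x => forall i, (i < n)%nat -> Rabs (dot (a i) x) <= 1) -> spanning a n.
Proof.
  intros Hbd.
  assert (Horth : forall v, (forall i, (i < n)%nat -> dot (a i) v = 0) -> norm1 v = 0).
  { intros v Hv; apply (bounded_line_degenerate _ v Hbd).
    intros t i Hi; rewrite dot_pscale, Hv, Rmult_0_r, Rabs_R0 by exact Hi; lra. }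
  destruct (classic (exists i, (i < n)%nat /\ 0 < norm1 (a i))) as [[i [Hi Hai]] | Hzero].
  - destruct (classic (exists l, (l < n)%nat /\ fst (a i) * snd (a l) - snd (a i) * fst (a l) <> 0))
      as [[l [Hl Hdet]] | Hpar].
    + exact (spanning_of_cross a n i l Hi Hl Hdet).
    + exfalso.
      assert (Hperp : norm1 (perp (a i)) = 0).
      { apply Horth; intros l Hl; apply NNPP; intros Hne; apply Hpar; exists l; split; [exact Hl|].
        unfold dot, perp in Hne; simpl in Hne; lra. }
      unfold norm1, perp in *; simpl in *; rewrite Rabs_Ropp in Hperp; lra.
  - exfalso.
    assert (H10 : norm1 (1, 0) = 0).
    { apply Horth; intros l Hl.
      assert (Hl0 : norm1 (a l) = 0)
        by (pose proof (norm1_nonneg (a l)); apply NNPP; intros Hne; apply Hzero; exists l; split; [exact Hl | lra]).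
      unfold norm1, dot in *; simpl.
      pose proof (Rabs_pos (snd (a l))).
      assert (Hfst : Rabs (fst (a l)) <= 0) by lra.
      apply Rabs_le_inv in Hfst; lra. }
    unfold norm1 in H10; simpl in H10; rewrite Rabs_R1, Rabs_R0 in H10; lra.
Qed.

(** * The sublevel sets of phi *)

Lemma exp_tangent m u : exp m * (1 + (u - m)) <= exp u.
Proof.
  replace (exp u) with (exp m * exp (u - m)) by (rewrite <- exp_plus; f_equal; ring).
  pose proof (exp_ineq1_le (u - m)); pose proof (exp_pos m); nra.
Qed.

Lemma exp_convex t u v :
  0 <= t <= 1 -> exp (t * u + (1 - t) * v) <= t * exp u + (1 - t) * exp v.
Proof.
  intros Ht; set (m := t * u + (1 - t) * v).
  pose proof (exp_tangent m u); pose proof (exp_tangent m v).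
  assert (E : exp m = t * (exp m * (1 + (u - m))) + (1 - t) * (exp m * (1 + (v - m))))
    by (unfold m; ring).
  nra.
Qed.

Lemma exp_lip u v : exp u <= exp v + exp u * Rabs (u - v).
Proof.
  pose proof (exp_tangent u v); pose proof (exp_pos u); pose proof (RRle_abs (u - v)); nra.
Qed.

Lemma exp_le_1 u : u <= 0 -> exp u <= 1.
Proof.
  rewrite <- exp_0; intros [Hlt | ->]; [left; apply exp_increasing |]; lra.
Qed.

Lemma le_ln_of_exp_le u c : 0 < c -> exp u <= c -> u <= ln c.
Proof.
  intros Hc Hu; destruct (Rle_or_lt u (ln c)) as [|Hlt]; [assumption|].
  apply exp_increasing in Hlt; rewrite exp_ln in Hlt; lra.
Qed.

Definition expterm (b : pt) (w : R) (x : pt) : R :=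
  exp (w * (dot b x - 1)) + exp (w * (- dot b x - 1)).

Definition expsum (a : nat -> pt) (n : nat) (w : R) (x : pt) : R :=
  fsum (fun i => expterm (a i) w x) n.

Lemma expterm_pos b w x : 0 < expterm b w x.
Proof. unfold expterm; pose proof (exp_pos (w * (dot b x - 1))); pose proof (exp_pos (w * (- dot b x - 1))); lra. Qed.

Lemma expterm_le_2 b w x : 0 <= w -> Rabs (dot b x) <= 1 -> expterm b w x <= 2.
Proof.
  intros Hw Hb; apply Rabs_le_inv in Hb; unfold expterm.
  assert (exp (w * (dot b x - 1)) <= 1) by (apply exp_le_1; nra).
  assert (exp (w * (- dot b x - 1)) <= 1) by (apply exp_le_1; nra).
  lra.
Qed.

Lemma dot_le_of_expterm_le b w x c : 0 < w -> expterm b w x <= c -> Rabs (dot b x) <= 1 + ln c / w.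
Proof.
  intros Hw Hc; pose proof (expterm_pos b w x) as Hpos; unfold expterm in *.
  pose proof (exp_pos (w * (dot b x - 1))); pose proof (exp_pos (w * (- dot b x - 1))).
  assert (H1 : w * (dot b x - 1) <= ln c) by (apply le_ln_of_exp_le; lra).
  assert (H2 : w * (- dot b x - 1) <= ln c) by (apply le_ln_of_exp_le; lra).
  assert (E : ln c / w * w = ln c) by (field; lra).
  apply Rabs_le; split; apply (Rmult_le_reg_l w); nra.
Qed.

Lemma expterm_convex b w x y t : 0 <= t <= 1 ->
  expterm b w (padd (pscale t x) (pscale (1 - t) y)) <= t * expterm b w x + (1 - t) * expterm b w y.
Proof.
  intros Ht; unfold expterm; rewrite dot_convex_comb.
  pose proof (exp_convex t (w * (dot b x - 1)) (w * (dot b y - 1)) Ht).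
  pose proof (exp_convex t (w * (- dot b x - 1)) (w * (- dot b y - 1)) Ht).
  replace (w * (t * dot b x + (1 - t) * dot b y - 1))
    with (t * (w * (dot b x - 1)) + (1 - t) * (w * (dot b y - 1))) by ring.
  replace (w * (- (t * dot b x + (1 - t) * dot b y) - 1))
    with (t * (w * (- dot b x - 1)) + (1 - t) * (w * (- dot b y - 1))) by ring.
  lra.
Qed.

Lemma expterm_pneg b w x : expterm b w (pneg x) = expterm b w x.
Proof. unfold expterm; rewrite dot_pneg, Ropp_involutive; ring. Qed.

Lemma expterm_lip b w x y : 0 <= w ->
  expterm b w x <= expterm b w y + expterm b w x * (w * norm1 b) * dist2 x y.
Proof.
  intros Hw; unfold expterm.
  assert (Hd : w * Rabs (dot b x - dot b y) <= w * norm1 b * dist2 x y)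
    by (rewrite Rmult_assoc; apply Rmult_le_compat_l; [lra | apply dot_sub_le_dist2]).
  pose proof (exp_lip (w * (dot b x - 1)) (w * (dot b y - 1))).
  pose proof (exp_lip (w * (- dot b x - 1)) (w * (- dot b y - 1))).
  replace (w * (dot b x - 1) - w * (dot b y - 1)) with (w * (dot b x - dot b y)) in * by ring.
  replace (w * (- dot b x - 1) - w * (- dot b y - 1)) with (- (w * (dot b x - dot b y))) in * by ring.
  rewrite Rabs_Ropp, Rabs_mult, (Rabs_pos_eq w Hw) in *.
  pose proof (exp_pos (w * (dot b x - 1))); pose proof (exp_pos (w * (- dot b x - 1))).
  nra.
Qed.

Lemma phi_le_1_iff a n w x : (0 < n)%nat -> phi a n w x <= 1 <-> expsum a n w x <= 2 * INR n.
Proof.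
  intros Hn; pose proof (lt_0_INR n Hn).
  change (phi a n w x) with (/ (2 * INR n) * expsum a n w x).
  assert (Hinv : 2 * INR n * / (2 * INR n) = 1) by (apply Rinv_r; lra).
  pose proof (Rinv_0_lt_compat (2 * INR n) ltac:(lra)).
  split; intros; nra.
Qed.

Lemma expsum_le_of_slab a n w x : 0 <= w ->
  (forall i, (i < n)%nat -> Rabs (dot (a i) x) <= 1) -> expsum a n w x <= 2 * INR n.
Proof.
  intros Hw H; unfold expsum; rewrite Rmult_comm, <- fsum_const.
  apply fsum_le; intros i Hi; apply expterm_le_2; auto.
Qed.

Lemma dot_le_of_expsum_le a n w x c : 0 < w -> expsum a n w x <= c ->
  forall i, (i < n)%nat -> Rabs (dot (a i) x) <= 1 + ln c / w.
Proof.
  intros Hw H i Hi; apply dot_le_of_expterm_le; [exact Hw|].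
  eapply Rle_trans; [|exact H].
  apply (fsum_ge_term (fun i => expterm (a i) w x)); [|exact Hi].
  intros; left; apply expterm_pos.
Qed.

Lemma expsum_convex a n w x y t : 0 <= t <= 1 ->
  expsum a n w (padd (pscale t x) (pscale (1 - t) y)) <= t * expsum a n w x + (1 - t) * expsum a n w y.
Proof.
  intros Ht; unfold expsum; rewrite <- !fsum_scale, <- fsum_add.
  apply fsum_le; intros; apply expterm_convex; exact Ht.
Qed.

Lemma expsum_pneg a n w x : expsum a n w (pneg x) = expsum a n w x.
Proof. apply fsum_ext; intros; apply expterm_pneg. Qed.

Lemma expsum_lip a n w x : 0 <= w ->
  exists L, 0 < L /\ forall y, expsum a n w x <= expsum a n w y + L * dist2 x y.
Proof.
  intros Hw; set (L0 := fsum (fun i => expterm (a i) w x * (w * norm1 (a i))) n).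
  assert (HL0 : 0 <= L0).
  { apply fsum_nonneg; intros i _; unfold norm1.
    pose proof (expterm_pos (a i) w x); pose proof (Rabs_pos (fst (a i))); pose proof (Rabs_pos (snd (a i))).
    apply Rmult_le_pos; nra. }
  exists (L0 + 1); split; [lra|]; intros y.
  assert (expsum a n w x <= expsum a n w y + L0 * dist2 x y).
  { unfold expsum, L0; rewrite Rmult_comm, <- fsum_scale, <- fsum_add.
    apply fsum_le; intros i _; rewrite (Rmult_comm (dist2 x y)); apply expterm_lip; exact Hw. }
  assert (0 <= dist2 x y) by apply sqrt_pos.
  nra.
Qed.

Lemma closed_sublevel (h : pt -> R) (B : R) :
  (forall x, exists L, 0 < L /\ forall y, h x <= h y + L * dist2 x y) -> closed_set (fun x => h x <= B).
Proof.
  intros Hlip x Hx; destruct (Rle_or_lt (h x) B) as [|Hgt]; [assumption|].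
  destruct (Hlip x) as [L [HL Hxy]].
  destruct (Hx ((h x - B) / L)) as [y [Hy Hd]]; [apply Rdiv_lt_0_compat; lra|].
  specialize (Hxy y).
  assert (L * dist2 x y < h x - B).
  { apply (Rmult_lt_compat_l L) in Hd; [|exact HL].
    replace (L * ((h x - B) / L)) with (h x - B) in Hd by (field; lra); exact Hd. }
  lra.
Qed.

Definition phi_body (a : nat -> pt) (n : nat) (w : R) : pt -> Prop := fun x => phi a n w x <= 1.

Lemma phi_body_K2 a n w : (0 < n)%nat -> 0 <= w ->
  bounded_set (phi_body a n w) -> nonempty_interior (phi_body a n w) -> K2 (phi_body a n w).
Proof.
  intros Hn Hw Hbd Hint; unfold phi_body.
  split; [| split; [split | split]]; try assumption.
  - intros x y t Hx Hy Ht; rewrite phi_le_1_iff in * by exact Hn.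
    pose proof (expsum_convex a n w x y t Ht).
    assert (t * expsum a n w x <= t * (2 * INR n)) by (apply Rmult_le_compat_l; lra).
    assert ((1 - t) * expsum a n w y <= (1 - t) * (2 * INR n)) by (apply Rmult_le_compat_l; lra).
    lra.
  - intros x Hx; apply phi_le_1_iff; [exact Hn|].
    apply (closed_sublevel (expsum a n w)); [intros; apply expsum_lip; exact Hw|].
    intros e He; destruct (Hx e He) as [y [Hy Hxy]].
    exists y; split; [apply phi_le_1_iff|]; assumption.
  - intros x Hx; rewrite phi_le_1_iff in * by exact Hn.
    change (- fst x, - snd x) with (pneg x); rewrite expsum_pneg; exact Hx.
Qed.

(** * Supporting functionals of a convex body *)

Lemma K2_ball K : K2 K -> exists rho, 0 < rho /\ forall y, norm1 y < rho -> K y.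
Proof.
  intros [Hconv [_ [[x0 [rho [Hrho Hball]]] Hsym]]].
  exists rho; split; [exact Hrho|]; intros y Hy.
  assert (Hp : K (padd x0 y)).
  { apply Hball; eapply Rle_lt_trans; [apply dist2_le_dist1|].
    unfold dist1, norm1 in *; simpl.
    replace (fst x0 - (fst x0 + fst y)) with (- fst y) by ring.
    replace (snd x0 - (snd x0 + snd y)) with (- snd y) by ring.
    rewrite !Rabs_Ropp; exact Hy. }
  assert (Hm : K (pneg (padd x0 (pneg y)))).
  { apply Hsym, Hball; eapply Rle_lt_trans; [apply dist2_le_dist1|].
    unfold dist1, norm1 in *; simpl.
    replace (fst x0 - (fst x0 + - fst y)) with (fst y) by ring.
    replace (snd x0 - (snd x0 + - snd y)) with (snd y) by ring.
    exact Hy. }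
  replace y with (padd (pscale (1 / 2) (padd x0 y)) (pscale (1 - 1 / 2) (pneg (padd x0 (pneg y)))))
    by (apply pt_eq; simpl; field).
  apply Hconv; [exact Hp | exact Hm | lra].
Qed.

Lemma convex_scale K y t : convex K -> K (0, 0) -> K y -> 0 <= t <= 1 -> K (pscale t y).
Proof.
  intros Hconv H0 Hy Ht.
  replace (pscale t y) with (padd (pscale t y) (pscale (1 - t) (0, 0))) by (apply pt_eq; simpl; ring).
  apply Hconv; assumption.
Qed.

Lemma Rle_separation (P Q : R -> Prop) :
  (exists p, P p) -> (exists q, Q q) -> (forall p q, P p -> Q q -> p <= q) ->
  exists c, (forall p, P p -> p <= c) /\ (forall q, Q q -> c <= q).
Proof.
  intros HP [q0 Hq0] HPQ.
  destruct (completeness P) as [c [Hub Hlub]]; [exists q0; intros p Hp; apply HPQ; assumption | exact HP |].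
  exists c; split; [exact Hub|].
  intros q Hq; apply Hlub; intros p Hp; apply HPQ; assumption.
Qed.

Definition polar_boundary (K : pt -> Prop) (f : pt) : Prop :=
  (forall y, K y -> dot f y <= 1) /\ (forall e, 0 < e -> exists y, K y /\ 1 - e < dot f y).

(* [f] supports [K] at the point [s u] where the ray through [u] leaves [K]. *)
Definition supports_along (K : pt -> Prop) (M : R) (u f : pt) : Prop :=
  exists s, 0 < s <= M /\ (forall th, 0 <= th < s -> K (pscale th u)) /\
    (forall y, K y -> dot f y <= 1) /\ dot f u = / s.

Section ConvexBody.

Variable K : pt -> Prop.
Variable rho : R.
Hypothesis Hconv : convex K.
Hypothesis Hrho : 0 < rho.
Hypothesis Hball : forall y, norm1 y < rho -> K y.

Lemma K_origin : K (0, 0).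
Proof. apply Hball; unfold norm1; simpl; rewrite Rabs_R0; lra. Qed.

Lemma support_coords_le f :
  (forall y, K y -> dot f y <= 1) -> Rabs (fst f) <= 2 / rho /\ Rabs (snd f) <= 2 / rho.
Proof.
  intros Hf.
  assert (Hr : forall y, norm1 y = rho / 2 -> dot f y <= 1) by (intros y Hy; apply Hf, Hball; lra).
  assert (Habs : Rabs (rho / 2) = rho / 2) by (apply Rabs_right; lra).
  assert (Habs' : Rabs (- (rho / 2)) = rho / 2) by (rewrite Rabs_Ropp; exact Habs).
  pose proof (Hr (rho / 2, 0)) as H1; pose proof (Hr (- (rho / 2), 0)) as H2.
  pose proof (Hr (0, rho / 2)) as H3; pose proof (Hr (0, - (rho / 2))) as H4.
  unfold norm1, dot in *; simpl in *; rewrite Rabs_R0, ?Habs, ?Habs' in *.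
  specialize (H1 ltac:(lra)); specialize (H2 ltac:(lra)); specialize (H3 ltac:(lra)); specialize (H4 ltac:(lra)).
  assert (E : 2 / rho * (rho / 2) = 1) by (field; lra).
  split; apply Rabs_le; split; nra.
Qed.

Lemma norm1_pos u : 0 < dot u u -> 0 < norm1 u.
Proof.
  intros Hu; unfold norm1, dot in *.
  destruct (Req_dec (fst u) 0) as [e1|e1]; [destruct (Req_dec (snd u) 0) as [e2|e2]|].
  - rewrite e1, e2 in Hu; lra.
  - pose proof (Rabs_pos_lt _ e2); pose proof (Rabs_pos (fst u)); lra.
  - pose proof (Rabs_pos_lt _ e1); pose proof (Rabs_pos (snd u)); lra.
Qed.

Lemma small_multiple_in u : 0 < dot u u ->
  exists th, 0 < th /\ forall t, Rabs t <= th -> K (pscale t u).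
Proof.
  intros Hu; pose proof (norm1_pos u Hu) as Hn.
  exists (rho / (2 * norm1 u)); split; [apply Rdiv_lt_0_compat; lra|].
  intros t Ht; apply Hball; unfold norm1 in *; simpl; rewrite !Rabs_mult.
  apply (Rmult_le_compat_r (Rabs (fst u) + Rabs (snd u))) in Ht; [|lra].
  replace (rho / (2 * (Rabs (fst u) + Rabs (snd u))) * (Rabs (fst u) + Rabs (snd u))) with (rho / 2) in Ht
    by (field; lra).
  lra.
Qed.

Lemma radial_extent M u :
  (forall y, K y -> dist2 y (0, 0) <= M) -> 1 <= dot u u ->
  exists s, 0 < s <= M /\ (forall th, 0 <= th < s -> K (pscale th u)) /\
    (forall th, K (pscale th u) -> th <= s).
Proof.
  intros Hbd Hu.
  set (E := fun th => 0 <= th /\ K (pscale th u)).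
  assert (HEM : forall th, E th -> th <= M).
  { intros th [Hth Hk]; apply Hbd in Hk; unfold dist2, pscale in Hk; unfold dot in Hu; simpl in Hk.
    rewrite <- (sqrt_square th) by lra; eapply Rle_trans; [|exact Hk]; apply sqrt_le_1_alt.
    nra. }
  destruct (small_multiple_in u ltac:(lra)) as [th0 [Hth0 Hsmall]].
  assert (HE0 : E th0) by (split; [lra | apply Hsmall; rewrite Rabs_right; lra]).
  destruct (completeness E) as [s [Hub Hlub]]; [exists M; exact HEM | exists th0; exact HE0 |].
  pose proof (Hub th0 HE0).
  exists s; split; [split; [lra | apply Hlub; exact HEM]|]; split.
  - intros th Hth.
    destruct (classic (exists th', E th' /\ th < th')) as [[th' [[Hth' Hk] Hlt]] | Hno].
    + replace (pscale th u) with (pscale (th / th') (pscale th' u)) by (apply pt_eq; simpl; field; lra).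
      apply convex_scale; [exact Hconv | exact K_origin | exact Hk |].
      split; [apply Rmult_le_pos; [lra | left; apply Rinv_0_lt_compat; lra]|].
      apply (Rmult_le_reg_r th'); [lra|]; field_simplify; lra.
    + assert (Hth_ub : is_upper_bound E th).
      { intros z Hz; destruct (Rle_or_lt z th); [assumption|]; exfalso; apply Hno; exists z; auto. }
      apply Hlub in Hth_ub; lra.
  - intros th Hk; destruct (Rle_or_lt 0 th); [apply Hub; split; assumption | lra].
Qed.

Section Supporting.

Variable u : pt.
Variable s : R.
Hypothesis Hu : 0 < dot u u.
Hypothesis Hmax : forall th, K (pscale th u) -> th <= s.

Lemma supporting_line y : K y -> dot (perp u) y = 0 -> dot u y <= s * dot u u.
Proof.
  intros Hy Hperp.
  assert (Hy' : y = pscale (dot u y / dot u u) u).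
  { unfold perp, dot in *; simpl in *.
    assert (E : fst u * snd y = snd u * fst y) by lra.
    apply pt_eq; simpl; field_simplify_eq; try lra.
    - replace (fst u * snd u * snd y) with (snd u * (fst u * snd y)) by ring; rewrite E; ring.
    - replace (fst u * fst y * snd u) with (fst u * (snd u * fst y)) by ring; rewrite <- E; ring. }
  rewrite Hy' in Hy; apply Hmax, (Rmult_le_compat_r (dot u u)) in Hy; [|lra].
  replace (dot u y / dot u u * dot u u) with (dot u y) in Hy by (field; lra); exact Hy.
Qed.

Lemma supporting_chord y1 y2 : K y1 -> K y2 -> dot (perp u) y1 < 0 -> 0 < dot (perp u) y2 ->
  dot u y1 * dot (perp u) y2 - dot u y2 * dot (perp u) y1
  <= s * dot u u * (dot (perp u) y2 - dot (perp u) y1).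
Proof.
  intros Hy1 Hy2 HB1 HB2; set (B1 := dot (perp u) y1) in *; set (B2 := dot (perp u) y2) in *.
  set (t := B2 / (B2 - B1)).
  assert (Ht : 0 <= t <= 1).
  { unfold t; split; [apply Rmult_le_pos; [lra | left; apply Rinv_0_lt_compat; lra]|].
    apply (Rmult_le_reg_r (B2 - B1)); [lra|]; field_simplify; lra. }
  (* the chord from y1 to y2 crosses the line through u at a point of K *)
  pose proof (supporting_line _ (Hconv _ _ _ Hy1 Hy2 Ht)) as Hz.
  rewrite !dot_convex_comb in Hz; fold B1 B2 in Hz.
  specialize (Hz ltac:(unfold t; field; lra)).
  apply (Rmult_le_compat_r (B2 - B1)) in Hz; [|lra].
  replace ((t * dot u y1 + (1 - t) * dot u y2) * (B2 - B1)) with (dot u y1 * B2 - dot u y2 * B1) in Hz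
    by (unfold t; field; lra).
  exact Hz.
Qed.

Lemma supporting_slope : exists c, forall y, K y -> dot u y + c * dot (perp u) y <= s * dot u u.
Proof.
  (* the line {y | dot u y + c * dot (perp u) y = s * dot u u} passes through s u; it supports K
     iff c is at least the slope towards each point of K below the line R u and at most the slope
     towards each point above it *)
  set (slope := fun y c => dot u y + c * dot (perp u) y = s * dot u u).
  assert (Hslope : forall y, dot (perp u) y <> 0 -> slope y ((s * dot u u - dot u y) / dot (perp u) y))
    by (intros y Hy; unfold slope; field; exact Hy).
  assert (Hperp : forall t, dot (perp u) (pscale t (perp u)) = t * dot u u)
    by (intros t; unfold perp, dot; simpl; ring).
  destruct (small_multiple_in (perp u) ltac:(unfold perp, dot in *; simpl; lra)) as [th [Hth Hthq]].
  destruct (Rle_separation (fun c => exists y, K y /\ dot (perp u) y < 0 /\ slope y c)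
                           (fun c => exists y, K y /\ 0 < dot (perp u) y /\ slope y c)) as [c [Hlo Hhi]].
  - assert (Hneg : dot (perp u) (pscale (- th) (perp u)) < 0) by (rewrite Hperp; nra).
    eexists; exists (pscale (- th) (perp u)); split; [apply Hthq; rewrite Rabs_Ropp, Rabs_right; lra|].
    split; [exact Hneg | apply Hslope; lra].
  - assert (Hpos : 0 < dot (perp u) (pscale th (perp u))) by (rewrite Hperp; nra).
    eexists; exists (pscale th (perp u)); split; [apply Hthq; rewrite Rabs_right; lra|].
    split; [exact Hpos | apply Hslope; lra].
  - intros p p' [y1 [Hy1 [HB1 Hp]]] [y2 [Hy2 [HB2 Hp']]]; unfold slope in *.
    pose proof (supporting_chord y1 y2 Hy1 Hy2 HB1 HB2).
    assert (Hneg : dot (perp u) y1 * dot (perp u) y2 < 0) by nra.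
    nra.
  - exists c; intros y Hy.
    destruct (Rtotal_order (dot (perp u) y) 0) as [HB | [HB | HB]].
    + assert (Hp : (s * dot u u - dot u y) / dot (perp u) y <= c)
        by (apply Hlo; exists y; split; [exact Hy | split; [exact HB | apply Hslope; lra]]).
      pose proof (Hslope y ltac:(lra)); unfold slope in *; nra.
    + rewrite HB, Rmult_0_r, Rplus_0_r; apply supporting_line; assumption.
    + assert (Hp : c <= (s * dot u u - dot u y) / dot (perp u) y)
        by (apply Hhi; exists y; split; [exact Hy | split; [exact HB | apply Hslope; lra]]).
      pose proof (Hslope y ltac:(lra)); unfold slope in *; nra.
Qed.

Lemma supporting_functional : 0 < s -> exists f, (forall y, K y -> dot f y <= 1) /\ dot f u = / s.
Proof.
  intros Hs; destruct supporting_slope as [c Hc].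
  assert (Hsn : 0 < s * dot u u) by nra.
  set (f := pscale (/ (s * dot u u)) (padd u (pscale c (perp u)))).
  assert (Hf : forall y, dot f y * (s * dot u u) = dot u y + c * dot (perp u) y)
    by (intros y; unfold f, perp, dot, padd, pscale in *; simpl; field; nra).
  exists f; split.
  - intros y Hy; apply (Rmult_le_reg_r (s * dot u u)); [exact Hsn|].
    rewrite Hf, Rmult_1_l; apply Hc; exact Hy.
  - apply (Rmult_eq_reg_r (s * dot u u)); [|lra].
    rewrite Hf; unfold perp, dot at 2; simpl; field; lra.
Qed.

End Supporting.

End ConvexBody.

Lemma supports_along_exists K rho M u : convex K -> 0 < rho -> (forall y, norm1 y < rho -> K y) ->
  (forall y, K y -> dist2 y (0, 0) <= M) -> 1 <= dot u u ->
  exists f, supports_along K M u f.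
Proof.
  intros Hconv Hrho Hball Hbd Hu.
  destruct (radial_extent K rho Hconv Hrho Hball M u Hbd Hu) as [s [Hs [Hin Hmax]]].
  destruct (supporting_functional K rho Hconv Hrho Hball u s ltac:(lra) Hmax ltac:(lra)) as [f [Hf Hfu]].
  exists f, s; auto.
Qed.

Lemma polar_boundary_of_supports_along K M u f : supports_along K M u f -> polar_boundary K f.
Proof.
  intros [s [Hs [Hin [Hf Hfu]]]]; split; [exact Hf|].
  intros e He; set (e' := Rmin e 1 / 2).
  assert (He' : 0 < e' <= 1 / 2 /\ e' < e)
    by (unfold e'; pose proof (Rmin_l e 1); pose proof (Rmin_r e 1); pose proof (Rmin_glb_lt e 1 0); lra).
  exists (pscale (s * (1 - e')) u); split; [apply Hin; nra|].
  rewrite dot_pscale, Hfu; field_simplify; lra.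
Qed.

Lemma polar_boundary_scale_le K f1 f2 s1 s2 : polar_boundary K f1 -> polar_boundary K f2 ->
  0 < s1 -> 0 < s2 -> pscale s1 f1 = pscale s2 f2 -> s1 <= s2.
Proof.
  intros [_ Hsup1] [Hle2 _] Hs1 Hs2 E.
  destruct (Rle_or_lt s1 s2) as [|Hlt]; [assumption|]; exfalso.
  destruct (Hsup1 ((s1 - s2) / s1)) as [y [Hy Hd]]; [apply Rdiv_lt_0_compat; lra|].
  assert (e : s1 * dot f1 y = s2 * dot f2 y) by (rewrite <- !dot_pscale_l, E; reflexivity).
  pose proof (Hle2 y Hy).
  assert (s1 * (1 - (s1 - s2) / s1) = s2) by (field; lra).
  assert (s1 * (1 - (s1 - s2) / s1) < s1 * dot f1 y) by (apply Rmult_lt_compat_l; lra).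
  nra.
Qed.

Lemma polar_boundary_scale_eq K f1 f2 s1 s2 : polar_boundary K f1 -> polar_boundary K f2 ->
  0 < s1 -> 0 < s2 -> pscale s1 f1 = pscale s2 f2 -> s1 = s2.
Proof.
  intros H1 H2 Hs1 Hs2 E; apply Rle_antisym;
    [apply (polar_boundary_scale_le K f1 f2) | apply (polar_boundary_scale_le K f2 f1)]; auto.
Qed.

Lemma polar_boundary_abs K f y : symmetric K -> polar_boundary K f -> K y -> Rabs (dot f y) <= 1.
Proof.
  intros Hsym [Hf _] Hy; pose proof (Hf y Hy); pose proof (Hf _ (Hsym y Hy)).
  change (- fst y, - snd y) with (pneg y) in *; rewrite dot_pneg in *.
  apply Rabs_le; lra.
Qed.

(** * Approximation by polytopes *)

Section NearRay.

Variable K : pt -> Prop.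
Variables rho M g im r : R.
Hypothesis Hrho : 0 < rho.
Hypothesis Hball : forall y, norm1 y < rho -> K y.
Hypothesis Hg : 0 < g <= 1 / 2.
Hypothesis Him : 0 <= im.
Hypothesis Hslope : 2 * M * im <= g * rho.
Hypothesis Hr : 3 * M * (4 * g + im) <= r.

Lemma near_ray_close u f x lam :
  norm1 u <= 2 -> supports_along K M u f -> 0 <= lam -> dist1 (pscale lam u) x <= lam * im ->
  Rabs (dot f x) <= 1 + g -> exists c, K c /\ dist2 c x <= r.
Proof.
  intros Hu [s [Hs [Hin [Hf Hfu]]]] Hlam Hx Hfx.
  destruct (support_coords_le K rho Hrho Hball f Hf) as [Hf1 Hf2].
  assert (Hdot : Rabs (lam * / s - dot f x) <= 2 / rho * (lam * im)).
  { rewrite <- Hfu, <- dot_pscale; eapply Rle_trans; [exact (dot_sub_le_dist1 f _ x _ Hf1 Hf2)|].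
    apply Rmult_le_compat_l; [left; apply Rdiv_lt_0_compat; lra | exact Hx]. }
  assert (Hgs : 2 / rho * im * s <= g).
  { apply (Rmult_le_reg_r rho); [exact Hrho|].
    replace (2 / rho * im * s * rho) with (2 * s * im) by (field; lra); nra. }
  (* [x] can be only slightly beyond the boundary point [s u] *)
  assert (Hlam_s : lam * (1 - g) <= s * (1 + g)).
  { apply Rabs_le_inv in Hfx; apply Rabs_le_inv in Hdot.
    assert (Hlin : lam * / s - 2 / rho * (lam * im) <= 1 + g) by lra.
    apply (Rmult_le_compat_r s) in Hlin; [|lra].
    replace ((lam * / s - 2 / rho * (lam * im)) * s) with (lam - lam * (2 / rho * im * s)) in Hlin
      by (field; lra).
    nra. }
  set (th := lam * (1 - 2 * g)).
  assert (Hth : 0 <= th < s).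
  { unfold th; split; [apply Rmult_le_pos; lra|].
    apply (Rmult_lt_reg_r (1 - g)); [lra|].
    pose proof (Rmult_le_compat_r (1 - 2 * g) _ _ ltac:(lra) Hlam_s).
    assert (0 < s * (g * g)) by (apply Rmult_lt_0_compat; nra).
    replace (lam * (1 - 2 * g) * (1 - g)) with (lam * (1 - g) * (1 - 2 * g)) by ring.
    nra. }
  assert (Hlam_M : lam <= 3 * M) by nra.
  exists (pscale th u); split; [apply Hin; exact Hth|].
  eapply Rle_trans; [apply dist2_le_dist1|].
  eapply Rle_trans; [apply (dist1_triangle _ (pscale lam u))|].
  rewrite dist1_pscale.
  replace (th - lam) with (- (2 * g * lam)) by (unfold th; ring).
  rewrite Rabs_Ropp, Rabs_right by nra.
  assert (lam * (4 * g + im) <= 3 * M * (4 * g + im)) by (apply Rmult_le_compat_r; lra).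
  assert (2 * g * lam * norm1 u <= 2 * g * lam * 2) by (apply Rmult_le_compat_l; nra).
  lra.
Qed.

End NearRay.

Definition grid_dir (m k : nat) : pt := (INR k / INR m - 1, 1).

(* [4 m + 2] directions on the boundary of the square [-1, 1]^2, one per grid point of the
   upper edge followed by one per grid point of the right edge; together with their negatives
   they cover all directions with angular gaps of order [1 / m]. *)
Definition udir (m k : nat) : pt :=
  if (k <=? 2 * m)%nat then grid_dir m k else pswap (grid_dir m (k - (2 * m + 1))).

Lemma grid_point (N : nat) a b :
  0 <= b -> 0 <= a <= INR N * b -> exists k, (k <= N)%nat /\ Rabs (a - INR k * b) <= b.
Proof.
  intros Hb; induction N as [|N IH]; intros Ha.
  - exists 0%nat; split; [lia|]; simpl in *; replace (a - 0 * b) with 0 by lra.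
    rewrite Rabs_R0; exact Hb.
  - rewrite S_INR in Ha; destruct (Rle_or_lt a (INR N * b)) as [Hle|Hlt].
    + destruct (IH ltac:(lra)) as [k [Hk Hk']]; exists k; split; [lia | exact Hk'].
    + exists (S N); split; [lia|]; rewrite S_INR; apply Rabs_le; lra.
Qed.

Lemma grid_dir_norm1 m k : (0 < m)%nat -> (k <= 2 * m)%nat -> norm1 (grid_dir m k) <= 2.
Proof.
  intros Hm Hk; pose proof (lt_0_INR m Hm); pose proof (pos_INR k).
  assert (INR k <= 2 * INR m) by (replace 2 with (INR 2) by reflexivity; rewrite <- mult_INR; apply le_INR; exact Hk).
  unfold norm1, grid_dir; simpl; rewrite Rabs_R1.
  assert (Rabs (INR k / INR m - 1) <= 1); [|lra].
  apply Rabs_le; split; apply (Rmult_le_reg_r (INR m)); try lra;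
    replace ((INR k / INR m - 1) * INR m) with (INR k - INR m) by (field; lra); lra.
Qed.

Lemma grid_dir_close m x : (0 < m)%nat -> Rabs (fst x) <= snd x ->
  exists k, (k <= 2 * m)%nat /\ dist1 (pscale (snd x) (grid_dir m k)) x <= snd x * / INR m.
Proof.
  intros Hm Hx; pose proof (lt_0_INR m Hm); apply Rabs_le_inv in Hx as Hx'.
  destruct (grid_point (2 * m) (INR m * (fst x + snd x)) (snd x)) as [k [Hk Hak]]; [lra | rewrite mult_INR; simpl; nra |].
  exists k; split; [exact Hk|].
  unfold dist1, grid_dir, pscale; simpl; rewrite Rmult_1_r, Rminus_diag, Rabs_R0, Rplus_0_r.
  replace (snd x * (INR k / INR m - 1) - fst x) with ((INR k * snd x - INR m * (fst x + snd x)) * / INR m)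
    by (field; lra).
  rewrite Rabs_mult, Rabs_minus_sym, (Rabs_right (/ INR m)) by (left; apply Rinv_0_lt_compat; lra).
  apply Rmult_le_compat_r; [left; apply Rinv_0_lt_compat; lra | exact Hak].
Qed.

Lemma udir_norm1 m k : (0 < m)%nat -> (k < 4 * m + 2)%nat -> norm1 (udir m k) <= 2.
Proof.
  intros Hm Hk; unfold udir; destruct (Nat.leb_spec k (2 * m)).
  - apply grid_dir_norm1; lia.
  - unfold norm1, pswap; simpl; rewrite Rplus_comm; apply grid_dir_norm1; lia.
Qed.

Lemma udir_sqnorm_ge1 m k : 1 <= dot (udir m k) (udir m k).
Proof.
  unfold dot, udir, grid_dir, pswap; destruct (k <=? 2 * m)%nat; simpl;
    [pose proof (pow2_ge_0 (INR k / INR m - 1)) | pose proof (pow2_ge_0 (INR (k - (2 * m + 1)) / INR m - 1))];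
    simpl in *; lra.
Qed.

Lemma udir_close m x : (0 < m)%nat -> Rabs (fst x) <= snd x \/ Rabs (snd x) <= fst x ->
  exists k lam, (k < 4 * m + 2)%nat /\ 0 <= lam /\ dist1 (pscale lam (udir m k)) x <= lam * / INR m.
Proof.
  intros Hm [Hx | Hx]; pose proof (Rabs_pos (fst x)); pose proof (Rabs_pos (snd x)).
  - destruct (grid_dir_close m x Hm Hx) as [k [Hk Hd]].
    exists k, (snd x); split; [lia | split; [lra|]].
    unfold udir; rewrite (proj2 (Nat.leb_le k (2 * m)) Hk); exact Hd.
  - destruct (grid_dir_close m (pswap x) Hm Hx) as [k [Hk Hd]].
    exists (2 * m + 1 + k)%nat, (fst x); split; [lia | split; [lra|]].
    unfold udir; rewrite (proj2 (Nat.leb_gt (2 * m + 1 + k) (2 * m)) ltac:(lia)).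
    replace (2 * m + 1 + k - (2 * m + 1))%nat with k by lia.
    rewrite <- dist1_pswap; exact Hd.
Qed.

Lemma udir_cover m x : (0 < m)%nat ->
  exists k lam, (k < 4 * m + 2)%nat /\ 0 <= lam /\
    (dist1 (pscale lam (udir m k)) x <= lam * / INR m \/
     dist1 (pscale lam (udir m k)) (pneg x) <= lam * / INR m).
Proof.
  intros Hm.
  assert (Hcase : (Rabs (fst x) <= snd x \/ Rabs (snd x) <= fst x) \/
                  (Rabs (fst (pneg x)) <= snd (pneg x) \/ Rabs (snd (pneg x)) <= fst (pneg x))).
  { unfold pneg; simpl; rewrite !Rabs_Ropp.
    destruct (Rle_or_lt (Rabs (fst x)) (Rabs (snd x))) as [H|H];
      [destruct (Rle_or_lt 0 (snd x)) | destruct (Rle_or_lt 0 (fst x))].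
    - left; left; rewrite (Rabs_right (snd x)) in H; lra.
    - right; left; rewrite (Rabs_left (snd x)) in H; lra.
    - left; right; rewrite (Rabs_right (fst x)) in H; lra.
    - right; right; rewrite (Rabs_left (fst x)) in H; lra. }
  destruct Hcase as [Hx | Hx]; destruct (udir_close m _ Hm Hx) as [k [lam [Hk [Hlam Hd]]]];
    exists k, lam; auto.
Qed.

Section Polytope.

Variable K : pt -> Prop.
Variables rho M g r : R.
Variable m : nat.
Variable F : nat -> pt.
Hypothesis Hsym : symmetric K.
Hypothesis Hrho : 0 < rho.
Hypothesis Hball : forall y, norm1 y < rho -> K y.
Hypothesis Hg : 0 < g <= 1 / 2.
Hypothesis Hm : (0 < m)%nat.
Hypothesis Hslope : 2 * M * / INR m <= g * rho.
Hypothesis Hr : 3 * M * (4 * g + / INR m) <= r.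
Hypothesis HF : forall k, supports_along K M (udir m k) (F k).

Lemma polytope_close x :
  (forall k, (k < 4 * m + 2)%nat -> Rabs (dot (F k) x) <= 1 + g) -> exists c, K c /\ dist2 c x <= r.
Proof.
  intros Hx; pose proof (lt_0_INR m Hm).
  assert (Him : 0 <= / INR m) by (left; apply Rinv_0_lt_compat; lra).
  destruct (udir_cover m x Hm) as [k [lam [Hk [Hlam [Hd | Hd]]]]].
  - exact (near_ray_close K rho M g _ r Hrho Hball Hg Him Hslope Hr _ _ x lam
             (udir_norm1 m k Hm Hk) (HF k) Hlam Hd (Hx k Hk)).
  - assert (Hnx : Rabs (dot (F k) (pneg x)) <= 1 + g) by (rewrite dot_pneg, Rabs_Ropp; exact (Hx k Hk)).
    destruct (near_ray_close K rho M g _ r Hrho Hball Hg Him Hslope Hr _ _ (pneg x) lam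
                (udir_norm1 m k Hm Hk) (HF k) Hlam Hd Hnx) as [c [Hc Hcx]].
    exists (pneg c); split; [exact (Hsym c Hc)|].
    rewrite <- (pneg_involutive x), dist2_pneg; exact Hcx.
Qed.

End Polytope.

Lemma polytope_approximation K r : K2 K -> 0 < r ->
  exists (n : nat) (F : nat -> pt) (g : R), 0 < g <= 1 / 2 /\ (forall k, polar_boundary K (F k)) /\
    forall x, (forall k, (k < n)%nat -> Rabs (dot (F k) x) <= 1 + g) -> exists c, K c /\ dist2 c x <= r.
Proof.
  intros HK Hr; pose proof (K2_ball K HK) as [rho [Hrho Hball]].
  destruct HK as [Hconv [[_ [M0 HM0]] [_ Hsym]]].
  set (M := Rabs M0 + 1).
  assert (HM : 0 < M) by (unfold M; pose proof (Rabs_pos M0); lra).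
  assert (Hbd : forall y, K y -> dist2 y (0, 0) <= M)
    by (intros y Hy; pose proof (HM0 y Hy); pose proof (RRle_abs M0); unfold M; lra).
  set (g := Rmin (1 / 2) (r / (24 * M))).
  assert (Hg : 0 < g <= 1 / 2)
    by (unfold g; split; [apply Rmin_glb_lt; [lra | apply Rdiv_lt_0_compat; lra] | apply Rmin_l]).
  assert (Hg_r : 12 * M * g <= r / 2).
  { assert (g <= r / (24 * M)) by apply Rmin_r.
    apply (Rmult_le_compat_l (12 * M)) in H; [|lra].
    replace (12 * M * (r / (24 * M))) with (r / 2) in H by (field; lra); exact H. }
  destruct (INR_archimed 1 (2 * M / (g * rho) + 6 * M / r) ltac:(lra)) as [m Hm]; rewrite Rmult_1_r in Hm.
  assert (Hm1 : 0 < 2 * M / (g * rho)) by (apply Rdiv_lt_0_compat; nra).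
  assert (Hm2 : 0 < 6 * M / r) by (apply Rdiv_lt_0_compat; lra).
  assert (Hm0 : (0 < m)%nat) by (destruct m; [simpl in Hm; lra | lia]).
  pose proof (lt_0_INR m Hm0) as HmR.
  assert (Hslope : 2 * M * / INR m <= g * rho).
  { apply (Rmult_le_reg_r (INR m)); [exact HmR|].
    replace (2 * M * / INR m * INR m) with (2 * M / (g * rho) * (g * rho)) by (field; split; lra).
    rewrite (Rmult_comm (g * rho)); apply Rmult_le_compat_r; nra. }
  assert (Hmr : 3 * M * / INR m <= r / 2).
  { apply (Rmult_le_reg_r (INR m)); [exact HmR|].
    replace (3 * M * / INR m * INR m) with (6 * M / r * (r / 2)) by (field; split; lra).
    rewrite (Rmult_comm (r / 2)); apply Rmult_le_compat_r; lra. }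
  destruct (choice (fun k f => supports_along K M (udir m k) f)) as [F HF].
  { intros k; exact (supports_along_exists K rho M (udir m k) Hconv Hrho Hball Hbd (udir_sqnorm_ge1 m k)). }
  exists (4 * m + 2)%nat, F, g; split; [exact Hg|]; split.
  - intros k; exact (polar_boundary_of_supports_along _ _ _ _ (HF k)).
  - apply (polytope_close K rho M g r m F Hsym Hrho Hball Hg Hm0 Hslope); [lra | exact HF].
Qed.

(** * Bodies of B_2^phi(j) close to a given body *)

Definition shrink (t : R) (i : nat) : R := 1 - t / (INR i + 1).

Lemma shrink_bounds t i : 0 <= t -> 1 - t <= shrink t i <= 1.
Proof.
  intros Ht; unfold shrink; pose proof (pos_INR i).
  assert (0 <= t / (INR i + 1) <= t); [|lra].
  split; [apply Rmult_le_pos; [lra | left; apply Rinv_0_lt_compat; lra]|].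
  apply (Rmult_le_reg_r (INR i + 1)); [lra|]; field_simplify; nra.
Qed.

Lemma shrink_inj t i l : 0 < t -> shrink t i = shrink t l -> i = l.
Proof.
  intros Ht E; unfold shrink in E; pose proof (pos_INR i); pose proof (pos_INR l).
  apply INR_eq, (Rplus_eq_reg_r 1), Rinv_eq_reg, (Rmult_eq_reg_l t); [unfold Rdiv in E; lra | lra].
Qed.

Section PhiBody.

Variable K : pt -> Prop.
Variables g r : R.
Variables n j : nat.
Variable F : nat -> pt.
Hypothesis HK : K2 K.
Hypothesis Hg : 0 < g <= 1 / 2.
Hypothesis Hr : 0 < r.
Hypothesis HF : forall k, polar_boundary K (F k).
Hypothesis Hpoly : forall x, (forall k, (k < n)%nat -> Rabs (dot (F k) x) <= 1 + g) ->
  exists c, K c /\ dist2 c x <= r.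
Hypothesis Hnj : (n <= j)%nat.
Hypothesis Hj : (0 < j)%nat.

(* Distinct factors [shrink] make the points distinct, since the [F k] are normalised. *)
Definition body_pts (i : nat) : pt := pscale (shrink (g / 4) i) (F (i mod n)).

Definition body_weight : R := 4 * (ln (2 * INR j) + 1) / g.

Let body := phi_body body_pts j body_weight.

Lemma ln_2j_pos : 0 < ln (2 * INR j).
Proof.
  rewrite <- ln_1; apply ln_increasing; [lra|].
  pose proof (lt_0_INR j Hj); assert (1 <= INR j) by (replace 1 with (INR 1) by reflexivity; apply le_INR; lia).
  lra.
Qed.

Lemma body_weight_bounds : ln (2 * INR j) < body_weight /\ ln (2 * INR j) / body_weight <= g / 4.
Proof.
  pose proof ln_2j_pos; unfold body_weight; set (L := ln (2 * INR j)) in *; split.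
  - apply (Rmult_lt_reg_r g); [lra|].
    replace (4 * (L + 1) / g * g) with (4 * (L + 1)) by (field; lra); nra.
  - replace (L / (4 * (L + 1) / g)) with (g / 4 * (L / (L + 1))) by (field; lra).
    assert (L / (L + 1) <= 1) by (apply (Rmult_le_reg_r (L + 1)); [lra|]; field_simplify; lra).
    assert (0 < g / 4) by lra; nra.
Qed.

Lemma body_pts_slab y : K y -> forall i, Rabs (dot (body_pts i) y) <= 1.
Proof.
  intros Hy i; unfold body_pts; rewrite dot_pscale_l, Rabs_mult.
  destruct HK as [_ [_ [_ Hsym]]]; pose proof (polar_boundary_abs K _ y Hsym (HF (i mod n)) Hy).
  pose proof (shrink_bounds (g / 4) i ltac:(lra)); rewrite Rabs_right by lra.
  pose proof (Rabs_pos (dot (F (i mod n)) y)); nra.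
Qed.

Lemma K_sub_body y : K y -> body y.
Proof.
  intros Hy; unfold body, phi_body; apply phi_le_1_iff; [exact Hj|].
  pose proof body_weight_bounds; pose proof ln_2j_pos.
  apply expsum_le_of_slab; [lra | intros i _; apply body_pts_slab; exact Hy].
Qed.

Lemma body_close x : body x -> exists c, K c /\ dist2 c x <= r.
Proof.
  intros Hx; apply Hpoly; intros k Hk.
  unfold body, phi_body in Hx; rewrite phi_le_1_iff in Hx by exact Hj.
  destruct body_weight_bounds as [Hw HLw]; pose proof ln_2j_pos.
  pose proof (dot_le_of_expsum_le body_pts j body_weight x _ ltac:(lra) Hx k ltac:(lia)) as Hk'.
  unfold body_pts in Hk'; rewrite Nat.mod_small in Hk' by exact Hk.
  rewrite dot_pscale_l, Rabs_mult in Hk'.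
  pose proof (shrink_bounds (g / 4) k ltac:(lra)); rewrite Rabs_right in Hk' by lra.
  set (z := Rabs (dot (F k) x)) in *; pose proof (Rabs_pos (dot (F k) x)).
  assert ((1 - g / 4) * z <= 1 + g / 4) by nra.
  nra.
Qed.

Lemma body_pts_distinct : distinct_pts body_pts j.
Proof.
  intros i l _ _ E; unfold body_pts in E.
  pose proof (shrink_bounds (g / 4) i ltac:(lra)); pose proof (shrink_bounds (g / 4) l ltac:(lra)).
  apply (shrink_inj (g / 4)); [lra|].
  apply (polar_boundary_scale_eq K _ _ _ _ (HF (i mod n)) (HF (l mod n))); [lra | lra | exact E].
Qed.

Lemma body_pts_spanning : spanning body_pts j.
Proof.
  apply spanning_of_bounded_slab.
  destruct HK as [_ [[_ Hbd] _]].
  apply (bounded_of_near K _ r Hbd); intros x Hx; apply body_close.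
  unfold body, phi_body; apply phi_le_1_iff; [exact Hj|].
  pose proof body_weight_bounds; pose proof ln_2j_pos.
  apply expsum_le_of_slab; [lra | exact Hx].
Qed.

Lemma body_K2 : K2 body.
Proof.
  pose proof body_weight_bounds; pose proof ln_2j_pos.
  destruct HK as [_ [[_ Hbd] [[x0 [rho [Hrho Hball]]] _]]].
  apply phi_body_K2; [exact Hj | lra | |].
  - exact (bounded_of_near K _ r Hbd body_close).
  - exists x0, rho; split; [exact Hrho|]; intros y Hy; apply K_sub_body, Hball, Hy.
Qed.

Lemma body_Bphi : Bphi j body.
Proof.
  exists body_pts, body_weight.
  split; [exact body_pts_distinct | split; [exact body_pts_spanning | split]].
  - apply body_weight_bounds.
  - intros x; reflexivity.
Qed.

Lemma body_hclose : hclose K body r.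
Proof.
  split.
  - intros a Ha; exists a; split; [apply K_sub_body; exact Ha | rewrite dist2_refl; lra].
  - intros b Hb; exact (body_close b Hb).
Qed.

End PhiBody.

Lemma Bphi_near K r : K2 K -> 0 < r ->
  exists N, (3 <= N)%nat /\ forall j, (N <= j)%nat -> exists C, Bphi j C /\ K2 C /\ hclose K C r.
Proof.
  intros HK Hr.
  destruct (polytope_approximation K r HK Hr) as [n [F [g [Hg [HF Hpoly]]]]].
  exists (Nat.max 3 n); split; [lia|]; intros j Hj.
  exists (phi_body (body_pts g n F) j (body_weight g j)).
  assert (Hnj : (n <= j)%nat) by lia; assert (Hj0 : (0 < j)%nat) by lia.
  split; [|split].
  - exact (body_Bphi K g r n j F HK Hg HF Hpoly Hnj Hj0).
  - exact (body_K2 K g r n j F HK Hg HF Hpoly Hnj Hj0).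
  - exact (body_hclose K g r n j F HK Hg Hr HF Hpoly Hnj Hj0).
Qed.

Theorem proposition4p13 :
  forall U : (pt -> Prop) -> Prop,
    open_in_K2 U -> (exists C, U C) ->
    exists N : nat, (3 <= N)%nat /\
      forall j : nat, (N <= j)%nat -> exists C, Bphi j C /\ U C.
Proof.
  intros U [HUK HUopen] [C0 HC0].
  destruct (HUopen C0 HC0) as [eps [Heps Hball]].
  destruct (Bphi_near C0 (eps / 2) (HUK C0 HC0) ltac:(lra)) as [N [HN Hnear]].
  exists N; split; [exact HN|]; intros j Hj.
  destruct (Hnear j Hj) as [C [HB [HC Hclose]]].
  exists C; split; [exact HB|].
  apply Hball; [exact HC|]; exists (eps / 2); repeat split; [lra | lra | apply Hclose | apply Hclose].
Qed.
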